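(* Let $r\ge1$ and $t\ge0$ be integers and $\alpha\in[\frac12,\frac23]$. Let $\boldsymbol{y}'=(\frac23,\ldots,\frac23,\alpha)\in\mathbb{R}^r$ (i.e. $y'_1=\cdots=y'_{r-1}=\frac23$, $y'_r=\alpha$) and $\boldsymbol{x}'=(\alpha,\ldots,\alpha)\in\mathbb{R}^t$, and let $R(\boldsymbol{y}',\boldsymbol{x}')=A(\boldsymbol{y}',\boldsymbol{x}')/B(\boldsymbol{y}',\boldsymbol{x}')$. If $\frac23(r-1)+\alpha\le(1-\alpha)t$, then \[ R(\boldsymbol{y}',\boldsymbol{x}')\le H_1(\alpha,r,t):=\frac{3(1-\alpha)\big(3\alpha(t+1)(2r+t)+2r(r-1)\big)}{3\alpha+4r^2+(6\alpha-2)r+9(1-\alpha)\alpha t(t+1)-2}. \] Otherwise (if $\frac23(r-1)+\alpha>(1-\alpha)t$), \[ R(\boldsymbol{y}',\boldsymbol{x}')\le H_2(\alpha,r,t):=\frac{6r(r-1)+9\alpha(t+1)(2r+t)}{\big(2r+3\alpha(t+1)-2\big)\big(2r+3\alpha(t+1)+1\big)}. \]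
   Context: For $\boldsymbol{y}\in\mathbb{R}^r_{>0}$ and $\boldsymbol{x}\in[0,1]^t$, set $x_i:=0$ for $i>t$ and define $A(\boldsymbol{y},\boldsymbol{x})=\sum_{i=1}^r i\,y_i+\sum_{i=1}^t (r+i)\,x_i$. Let $\ell\in\mathbb{N}$ be the unique index with $\sum_{i=1}^{\ell-1}(1-x_i)<\sum_{i=1}^r y_i\le\sum_{i=1}^{\ell}(1-x_i)$, and $\rho:=\sum_{i=1}^r y_i-\sum_{i=1}^{\ell-1}(1-x_i)\in(0,1-x_\ell]$. Define $B(\boldsymbol{y},\boldsymbol{x})=\frac12\ell(\ell-1)+(x_\ell+\rho)\ell+\sum_{i=\ell+1}^{t} i\,x_i$ (the last sum being $0$ if $\ell\ge t$). This is the cost of the ''pseudo-packing'' with weight $1$ in bins $1,\ldots,\ell-1$, weight $x_\ell+\rho$ in bin $\ell$ and weight $x_i$ in bins $i>\ell$. *)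

From mathcomp Require Import all_boot all_order all_algebra.
Set Implicit Arguments. Unset Strict Implicit. Unset Printing Implicit Defensive.
Import Order.TTheory GRing.Theory Num.Theory.
Local Open Scope ring_scope.

Section PseudoPacking.
Variable R : realFieldType.

(* vectors are functions on nat; only indices 1..r (resp. 1..t) are used *)
Definition xext (t : nat) (x : nat -> R) (i : nat) : R :=
  if (1 <= i <= t)%N then x i else 0.

Definition Acost (r t : nat) (y x : nat -> R) : R :=
  \sum_(1 <= i < r.+1) i%:R * y i + \sum_(1 <= i < t.+1) (r + i)%:R * x i.

Definition ysum (r : nat) (y : nat -> R) : R := \sum_(1 <= i < r.+1) y i.

Definition cum (t : nat) (x : nat -> R) (l : nat) : R :=
  \sum_(1 <= i < l) (1 - xext t x i).

Definition is_ell (r t : nat) (y x : nat -> R) (l : nat) : Prop :=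
  (1 <= l)%N /\ cum t x l < ysum r y /\ ysum r y <= cum t x l.+1.

Definition rho (r t : nat) (y x : nat -> R) (l : nat) : R :=
  ysum r y - cum t x l.

Definition Bcost (r t : nat) (y x : nat -> R) (l : nat) : R :=
  (l * (l - 1))%:R / 2 + (xext t x l + rho r t y x l) * l%:R
  + \sum_(l.+1 <= i < t.+1) i%:R * x i.

Definition yprime (r : nat) (alpha : R) (i : nat) : R :=
  if (i < r)%N then 2 / 3 else alpha.
Definition xprime (alpha : R) (i : nat) : R := alpha.

Definition H1 (alpha : R) (r t : nat) : R :=
  (3 * (1 - alpha) * (3 * alpha * (t%:R + 1) * (2 * r%:R + t%:R)
                      + 2 * r%:R * (r%:R - 1)))
  / (3 * alpha + 4 * r%:R ^+ 2 + (6 * alpha - 2) * r%:R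
     + 9 * (1 - alpha) * alpha * t%:R * (t%:R + 1) - 2).

Definition H2 (alpha : R) (r t : nat) : R :=
  (6 * r%:R * (r%:R - 1) + 9 * alpha * (t%:R + 1) * (2 * r%:R + t%:R))
  / ((2 * r%:R + 3 * alpha * (t%:R + 1) - 2)
     * (2 * r%:R + 3 * alpha * (t%:R + 1) + 1)).

End PseudoPacking.

From mathcomp Require Import all_boot all_order all_algebra.
From mathcomp Require Import ring lra.
Import Order.TTheory GRing.Theory Num.Theory.
Set Implicit Arguments. Unset Strict Implicit. Unset Printing Implicit Defensive.
Local Open Scope ring_scope.

(* Write c := 1 - alpha and S := 2/3 (r - 1) + alpha for the total weight of
   y'.  Since every x'_i equals alpha, the bins 1..t have free capacity c and
   the bins beyond t capacity 1, so the pseudo-packing index l is the bin in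
   which the running free capacity reaches S.  With L := l - 1:
   - if l <= t, then c L < S <= c (L + 1), and B is c times the area under a
     unit staircase up to S / c, plus alpha t (t + 1) / 2;
   - if l > t, then L < u <= L + 1 for u := S + alpha t, and B is the area
     under a unit staircase up to u.
   In both cases the staircase dominates the parabola u (u + 1) / 2
   ([staircase_ge_parabola]), which gives a lower bound for B; the numerators
   of H1 and H2 are the multiples 18 c A and 18 A of the closed form of A, so
   the bound on B turns into the bound on A / B ([ratio_le_scaled]).  Which
   regime occurs is decided by the comparison of S with c t ([ell_le_t]). *)

Section RealFacts.
Variable R : realFieldType.

(* The area under a staircase of step width c dominates the parabola through
   its corners: for c L <= s <= c (L + 1) the difference factors as
   (s - c L) (c (L + 1) - s) >= 0. *)
Lemma staircase_ge_parabola (c L s : R) :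
  c * L <= s -> s <= c * (L + 1) ->
  s * (s + c) <= c ^+ 2 * (L * (L + 1)) + 2 * c * (s - c * L) * (L + 1).
Proof.
move=> s_ge s_le; rewrite -subr_ge0.
have -> : c ^+ 2 * (L * (L + 1)) + 2 * c * (s - c * L) * (L + 1) - s * (s + c)
          = (s - c * L) * (c * (L + 1) - s) by ring.
by apply: mulr_ge0; rewrite subr_ge0.
Qed.

Lemma ratio_le_scaled (k a b d : R) :
  0 < k -> 0 <= a -> 0 < d -> d <= k * b -> a / b <= k * a / d.
Proof.
move=> k_gt0 a_ge0 d_gt0 d_le.
have b_gt0 : 0 < b by rewrite -(pmulr_rgt0 _ k_gt0); exact: lt_le_trans d_le.
rewrite ler_pdivlMr // mulrAC ler_pdivrMr //.
have -> : k * a * b = a * (k * b) by ring.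
exact: ler_wpM2l.
Qed.

Lemma sum_nat_tri (n : nat) :
  \sum_(1 <= i < n.+1) (i%:R : R) = n%:R * (n%:R + 1) / 2.
Proof.
elim: n => [|n IH]; first by rewrite big_geq // !mul0r.
by rewrite big_nat_recr //= IH -addn1 natrD; field.
Qed.

End RealFacts.

Section PrimeVectors.
Variables (R : realFieldType) (alpha : R).

Lemma ysum_yprime (r : nat) :
  (1 <= r)%N -> ysum r (yprime r alpha) = 2 / 3 * (r%:R - 1) + alpha.
Proof.
case: r => [//|r] _; rewrite /ysum big_nat_recr //= {2}/yprime ltnn.
rewrite (eq_big_nat _ _ (F2 := fun=> 2 / 3)) => [|i /andP[_ hi]]; last first.
  by rewrite /yprime hi.
by rewrite sumr_const_nat subn1 /= -[r.+1]addn1 natrD addrK mulr_natr.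
Qed.

(* Closed form of A(y', x'); the right-hand side is the numerator of H2. *)
Lemma Acost_prime (r t : nat) : (1 <= r)%N ->
  18 * Acost r t (yprime r alpha) (xprime alpha)
  = 6 * r%:R * (r%:R - 1) + 9 * alpha * (t%:R + 1) * (2 * r%:R + t%:R).
Proof.
case: r => [//|r] _; rewrite /Acost big_nat_recr //= {2}/yprime ltnn /xprime.
rewrite (eq_big_nat _ _ (F2 := fun i => i%:R * (2 / 3))) => [|i /andP[_ hi]].
  rewrite [X in _ + X](eq_bigr (fun i => r.+1%:R * alpha + i%:R * alpha)).
    rewrite big_split /= sumr_const_nat -!mulr_suml !sum_nat_tri subn1 /=.
    by rewrite -mulr_natr -[r.+1]addn1 natrD; field.
  by move=> i _; rewrite natrD mulrDl.
by rewrite /yprime hi.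
Qed.

Lemma cum_xprime (t L : nat) :
  cum t (xprime alpha) L.+1 = L%:R - alpha * (minn L t)%:R.
Proof.
elim: L => [|L IH]; first by rewrite /cum big_geq // min0n mulr0 subr0.
rewrite /cum big_nat_recr //= -/(cum t (xprime alpha) L.+1) IH /xext /xprime /=.
case: (leqP L.+1 t) => hLt.
  by rewrite (minn_idPl (ltnW hLt)) -addn1 natrD; ring.
by rewrite (minn_idPr (hLt : (t <= L)%N)) -addn1 natrD; ring.
Qed.

Lemma tail_xprime (t L : nat) : (L < t)%N ->
  \sum_(L.+2 <= i < t.+1) i%:R * xprime alpha i
  = (t%:R * (t%:R + 1) / 2 - L.+1%:R * (L.+1%:R + 1) / 2) * alpha.
Proof.
move=> hLt; rewrite /xprime -mulr_suml.
have := sum_nat_tri R t; rewrite (@big_cat_nat _ _ _ L.+2) // sum_nat_tri => <-.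
by rewrite /= addrC addrK.
Qed.

(* B when l = L + 1 <= t: a staircase of width 1 - alpha plus the constant
   weight alpha t (t + 1) / 2 of x'. *)
Lemma Bcost_low (r t : nat) (y : nat -> R) (L : nat) : (L < t)%N ->
  2 * Bcost r t y (xprime alpha) L.+1
  = (1 - alpha) * (L%:R * (L%:R + 1))
    + 2 * (ysum r y - (1 - alpha) * L%:R) * (L%:R + 1)
    + alpha * (t%:R * (t%:R + 1)).
Proof.
move=> hLt; rewrite /Bcost /rho cum_xprime (minn_idPl (ltnW hLt)) tail_xprime //.
by rewrite /xext /= hLt /xprime subn1 /= -[L.+1]addn1 natrM natrD; field.
Qed.

(* B when l = L + 1 > t: a staircase of width 1 filled up to S + alpha t. *)
Lemma Bcost_high (r t : nat) (y : nat -> R) (L : nat) : (t <= L)%N ->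
  2 * Bcost r t y (xprime alpha) L.+1
  = L%:R * (L%:R + 1) + 2 * (ysum r y + alpha * t%:R - L%:R) * (L%:R + 1).
Proof.
move=> htL; rewrite /Bcost /rho cum_xprime (minn_idPr htL) big_geq ?ltnS ?leqW //.
by rewrite /xext /= ltnNge htL /= subn1 /= -[L.+1]addn1 natrM natrD; field.
Qed.

End PrimeVectors.

Section Regimes.
Variables (R : realFieldType) (alpha : R) (r t : nat) (y : nat -> R).

Lemma ell_bounds_low (L : nat) :
  is_ell r t y (xprime alpha) L.+1 -> (L < t)%N ->
  (1 - alpha) * L%:R < ysum r y <= (1 - alpha) * (L%:R + 1).
Proof.
move=> [_ [lo hi]] hLt; move: lo hi.
rewrite !cum_xprime (minn_idPl (ltnW hLt)) (minn_idPl hLt) -[L.+1]addn1 natrD.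
by move=> lo hi; apply/andP; split; lra.
Qed.

Lemma ell_bounds_high (L : nat) :
  is_ell r t y (xprime alpha) L.+1 -> (t <= L)%N ->
  L%:R < ysum r y + alpha * t%:R <= L%:R + 1.
Proof.
move=> [_ [lo hi]] htL; move: lo hi.
rewrite !cum_xprime (minn_idPr htL) (minn_idPr (leqW htL)) -[L.+1]addn1 natrD.
by move=> lo hi; apply/andP; split; lra.
Qed.

Lemma ell_le_t (l : nat) : alpha <= 1 -> is_ell r t y (xprime alpha) l ->
  (l <= t)%N = (ysum r y <= (1 - alpha) * t%:R).
Proof.
move=> alpha_le1; case: l => [[]//|L] hell; case: (ltnP L t) => hLt.
- have /andP[_ hi] := ell_bounds_low hell hLt.
  apply/esym/(le_trans hi)/ler_wpM2l; first by rewrite subr_ge0.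
  by rewrite natr1 ler_nat.
- have /andP[lo _] := ell_bounds_high hell hLt.
  have htL : t%:R <= L%:R :> R by rewrite ler_nat.
  by apply/esym/negbTE; rewrite -ltNge; lra.
Qed.

Lemma Bcost_ge_low (l : nat) :
  is_ell r t y (xprime alpha) l -> (l <= t)%N ->
  ysum r y * (ysum r y + (1 - alpha)) + (1 - alpha) * alpha * (t%:R * (t%:R + 1))
  <= 2 * (1 - alpha) * Bcost r t y (xprime alpha) l.
Proof.
case: l => [[]//|L] hell hLt.
have /andP[lo hi] := ell_bounds_low hell hLt.
have stair := staircase_ge_parabola (ltW lo) hi.
by rewrite [2 * _ * Bcost _ _ _ _ _]mulrAC Bcost_low //; lra.
Qed.

Lemma Bcost_ge_high (l : nat) :
  is_ell r t y (xprime alpha) l -> (t < l)%N ->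
  (ysum r y + alpha * t%:R) * (ysum r y + alpha * t%:R + 1)
  <= 2 * Bcost r t y (xprime alpha) l.
Proof.
case: l => [[]//|L] hell htL.
have /andP[lo hi] := ell_bounds_high hell htL.
have := @staircase_ge_parabola R 1 L%:R (ysum r y + alpha * t%:R).
rewrite !mul1r => /(_ (ltW lo) hi) stair.
by rewrite Bcost_high //; lra.
Qed.

End Regimes.

Section RatioBounds.
Variables (R : realFieldType) (alpha : R) (r t : nat).

Local Notation mass := (2 / 3 * (r%:R - 1) + alpha).
Local Notation A := (Acost r t (yprime r alpha) (xprime alpha)).

Lemma mass_gt0 : (1 <= r)%N -> 0 < alpha -> 0 < mass.
Proof.
move=> r_ge1 alpha_gt0; have r1 : 1 <= r%:R :> R by rewrite ler1n.
lra.
Qed.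

Lemma Acost_prime_ge0 : (1 <= r)%N -> 0 <= alpha -> 0 <= A.
Proof.
move=> r_ge1 alpha_ge0.
have r1 : 1 <= r%:R :> R by rewrite ler1n.
have t0 : 0 <= t%:R :> R by rewrite ler0n.
have rr_ge0 : 0 <= r%:R * (r%:R - 1) :> R by apply: mulr_ge0; lra.
have tr_ge0 : 0 <= alpha * ((t%:R + 1) * (2 * r%:R + t%:R)).
  by apply: mulr_ge0 => //; apply: mulr_ge0; lra.
rewrite -(pmulr_rge0 _ (_ : 0 < 18)) // Acost_prime //.
lra.
Qed.

Lemma ratio_le_H1 (B : R) : (1 <= r)%N -> 0 < alpha -> alpha < 1 ->
  mass * (mass + (1 - alpha)) + (1 - alpha) * alpha * (t%:R * (t%:R + 1))
    <= 2 * (1 - alpha) * B ->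
  A / B <= H1 alpha r t.
Proof.
move=> r_ge1 alpha_gt0 alpha_lt1 B_ge.
have -> : H1 alpha r t = 18 * (1 - alpha) * A
    / (9 * (mass * (mass + (1 - alpha))
            + (1 - alpha) * alpha * (t%:R * (t%:R + 1)))).
  have -> : 18 * (1 - alpha) * A = (1 - alpha) * (18 * A) by ring.
  by rewrite /H1 Acost_prime //; congr (_ / _); field.
have A_ge0 := Acost_prime_ge0 r_ge1 (ltW alpha_gt0).
have mass_pos := mass_gt0 r_ge1 alpha_gt0.
have t0 : 0 <= t%:R :> R by rewrite ler0n.
have tail_ge0 : 0 <= (1 - alpha) * alpha * (t%:R * (t%:R + 1)).
  by apply: mulr_ge0; apply: mulr_ge0; lra.
have head_gt0 : 0 < mass * (mass + (1 - alpha)) by apply: mulr_gt0; lra.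
by apply: ratio_le_scaled => //; lra.
Qed.

Lemma ratio_le_H2 (B : R) : (1 <= r)%N -> 0 < alpha ->
  (mass + alpha * t%:R) * (mass + alpha * t%:R + 1) <= 2 * B ->
  A / B <= H2 alpha r t.
Proof.
move=> r_ge1 alpha_gt0 B_ge.
have -> : H2 alpha r t = 18 * A
    / (9 * ((mass + alpha * t%:R) * (mass + alpha * t%:R + 1))).
  by rewrite /H2 Acost_prime //; congr (_ / _); field.
have A_ge0 := Acost_prime_ge0 r_ge1 (ltW alpha_gt0).
have mass_pos := mass_gt0 r_ge1 alpha_gt0.
have t0 : 0 <= t%:R :> R by rewrite ler0n.
have at_ge0 : 0 <= alpha * t%:R by apply: mulr_ge0; lra.
have sq_gt0 : 0 < (mass + alpha * t%:R) * (mass + alpha * t%:R + 1).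
  by apply: mulr_gt0; lra.
by apply: ratio_le_scaled => //; lra.
Qed.

End RatioBounds.

Theorem claim3 (R : realFieldType) (r t : nat) (alpha : R) (l : nat) :
  (1 <= r)%N -> 1 / 2 <= alpha -> alpha <= 2 / 3 ->
  is_ell r t (yprime r alpha) (xprime alpha) l ->
  let Rv := Acost r t (yprime r alpha) (xprime alpha)
            / Bcost r t (yprime r alpha) (xprime alpha) l in
  (2 / 3 * (r%:R - 1) + alpha <= (1 - alpha) * t%:R -> Rv <= H1 alpha r t) /\
  ((1 - alpha) * t%:R < 2 / 3 * (r%:R - 1) + alpha -> Rv <= H2 alpha r t).
Proof.
move=> r_ge1 alpha_lo alpha_hi hell; cbv zeta.
have alpha_gt0 : 0 < alpha by lra.
have alpha_lt1 : alpha < 1 by lra.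
have mass := ysum_yprime alpha r_ge1.
have regime := ell_le_t (ltW alpha_lt1) hell; rewrite mass in regime.
split=> hcase.
- have l_le_t : (l <= t)%N by rewrite regime.
  have := Bcost_ge_low hell l_le_t; rewrite mass.
  exact: ratio_le_H1.
- have t_lt_l : (t < l)%N by rewrite ltnNge regime -ltNge.
  have := Bcost_ge_high hell t_lt_l; rewrite mass.
  exact: ratio_le_H2.
Qed.
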